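(* Let $A\in\mathbb R^{N\times 2d}$ and let $K:\mathbb T^N\to\mathbb R^{2d}$ be continuous. Suppose that for every $\omega\in\mathbb T^N$ the map $x\mapsto\Phi(x,\omega)=x+K(\omega+Ax\bmod1)$ is a symplectic twist diffeomorphism of $\mathbb R^{2d}$. Then $\widehat\Phi(\cdot,\omega)-\mathrm{id}$ is quasiperiodic.
   Context: Points of $\mathbb R^{2d}$ are written $(q,p)$, $q,p\in\mathbb R^d$, symplectic form $\sum dq_i\wedge dp_i$; $\mathbb T^N=[0,1]^N$ with $0=1$. A symplectic diffeomorphism $\Phi=(Q,P)$ is twist if for every $p$ the map $q\mapsto Q(q,p)$ is a diffeomorphism of $\mathbb R^d$; $\hat q(Q,p)$ denotes its inverse, $\hat P(Q,p)=P(\hat q(Q,p),p)$, and $\widehat\Phi(Q,p)=(\hat q(Q,p),\hat P(Q,p))$. A function $g:\mathbb R^{2d}\to\mathbb R^{2d}$ is quasiperiodic if $g(x)=\gamma(c+Bx)$ for some $M$, some continuous $\mathbb Z^M$-periodic $\gamma:\mathbb R^M\to\mathbb R^{2d}$, some $c\in\mathbb R^M$ and some matrix $B\in\mathbb R^{M\times2d}$. *)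

From HB Require Import structures.
From mathcomp Require Import all_boot all_order all_algebra.
From mathcomp Require Import all_classical all_reals all_analysis.
Set Implicit Arguments. Unset Strict Implicit. Unset Printing Implicit Defensive.
Import Order.TTheory GRing.Theory Num.Theory.
Import numFieldNormedType.Exports.
Local Open Scope ring_scope.
Local Open Scope classical_set_scope.

(* Points of R^(2d) are row vectors x = row_mx q p : 'rV_(d + d),
   q = lsubmx x, p = rsubmx x. *)

Section Defs.
Variable R : realType.

Definition C1 (m n : nat) (f : 'rV[R]_m -> 'rV[R]_n) : Prop :=
  (forall x, differentiable f x) /\ (forall v, continuous (fun x => 'd f x v)).

Definition diffeo (n : nat) (f : 'rV[R]_n -> 'rV[R]_n) : Prop :=
  exists g : 'rV[R]_n -> 'rV[R]_n,
    cancel f g /\ cancel g f /\ C1 f /\ C1 g.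

Definition omega (d : nat) (u v : 'rV[R]_(d + d)) : R :=
  \sum_(i < d) (lsubmx u 0 i * rsubmx v 0 i - rsubmx u 0 i * lsubmx v 0 i).

Definition symplectic_diffeo (d : nat) (Phi : 'rV[R]_(d + d) -> 'rV[R]_(d + d)) : Prop :=
  diffeo Phi /\
  forall x u v, omega ('d Phi x u) ('d Phi x v) = omega u v.

Definition Qof (d : nat) (Phi : 'rV[R]_(d + d) -> 'rV[R]_(d + d)) (q p : 'rV[R]_d) :=
  lsubmx (Phi (row_mx q p)).
Definition Pof (d : nat) (Phi : 'rV[R]_(d + d) -> 'rV[R]_(d + d)) (q p : 'rV[R]_d) :=
  rsubmx (Phi (row_mx q p)).

Definition twist (d : nat) (Phi : 'rV[R]_(d + d) -> 'rV[R]_(d + d)) : Prop :=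
  forall p, diffeo (fun q => Qof Phi q p).

Definition symplectic_twist_diffeo (d : nat) (Phi : 'rV[R]_(d + d) -> 'rV[R]_(d + d)) :=
  symplectic_diffeo Phi /\ twist Phi.

(* qhat(Q,p): the inverse of q |-> Q(q,p) (unique when Phi is twist) *)
Definition qhat (d : nat) (Phi : 'rV[R]_(d + d) -> 'rV[R]_(d + d)) (Q p : 'rV[R]_d) :=
  xget 0 [set q | Qof Phi q p = Q].

Definition hatPhi (d : nat) (Phi : 'rV[R]_(d + d) -> 'rV[R]_(d + d)) (x : 'rV[R]_(d + d)) :=
  let Q := lsubmx x in let p := rsubmx x in
  row_mx (qhat Phi Q p) (Pof Phi (qhat Phi Q p) p).

Definition Zperiodic (M n : nat) (g : 'rV[R]_M -> 'rV[R]_n) : Prop :=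
  forall (y : 'rV[R]_M) (k : 'rV[int]_M), g (y + map_mx (fun z : int => z%:~R) k) = g y.

Definition quasiperiodic (d : nat) (g : 'rV[R]_(d + d) -> 'rV[R]_(d + d)) : Prop :=
  exists (M : nat) (gamma : 'rV[R]_M -> 'rV[R]_(d + d)) (c : 'rV[R]_M) (B : 'M[R]_(M, d + d)),
    continuous gamma /\ Zperiodic gamma /\
    forall x, g x = gamma (c + (B *m x^T)^T).

End Defs.

From HB Require Import structures.
From mathcomp Require Import all_boot all_order all_algebra.
From mathcomp Require Import all_classical all_reals all_analysis.
From mathcomp Require Import lra.
Set Implicit Arguments. Unset Strict Implicit. Unset Printing Implicit Defensive.
Import Order.TTheory GRing.Theory Num.Theory.
Import numFieldNormedType.Exports.
Local Open Scope ring_scope.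
Local Open Scope classical_set_scope.

(* Put t = omega + A x. Since Phi moves x by K t, the point Q = Q(q, p) satisfies
   omega + A (Q, p) = shear (omega + A (q, p)) with shear t = t + A (K_q t, 0), so
   the twist condition says exactly that shear is a bijection of R^N. It commutes
   with integer translations and shear - id is bounded, hence its inverse is
   continuous and commutes with them too. Solving for qhat then gives
   hatPhi x - x = (- K_q t, K_p t) with t = shear^-1 (omega + A x), a continuous
   Z^N-periodic function of omega + A x. *)

Local Notation intmx k := (map_mx (fun z : int => z%:~R) k).

Section RowVectorTopology.
Variable R : realType.

Lemma linear_mx_continuous m n p q (f : 'M[R]_(m, n) -> 'M[R]_(p, q)) :
  linear f -> continuous f.
Proof.
move=> f_lin.
pose fL : {linear 'M[R]_(m, n) -> 'M[R]_(p, q)} :=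
  HB.pack f (GRing.isLinear.Build _ _ _ _ f f_lin).
have coordZ_cont i j (v : 'M[R]_(p, q)) :
    continuous (fun M : 'M[R]_(m, n) => M i j *: v).
  by move=> M; apply: continuousZ; [exact: coord_continuous | exact: cst_continuous].
have -> : f = fun M => \sum_i \sum_j M i j *: fL (delta_mx i j).
  apply: funext => M; rewrite -[f M]/(fL M) [in LHS](matrix_sum_delta M) linear_sum.
  by apply: eq_bigr => i _; rewrite linear_sum; apply: eq_bigr => j _; rewrite linearZ.
apply: continuous_big => [|i _]; first exact: add_continuous.
by apply: continuous_big => [|j _]; [exact: add_continuous | exact: coordZ_cont].
Qed.

Lemma Zperiodic_continuous_bounded M n (g : 'rV[R]_M -> 'rV[R]_n) :
  continuous g -> Zperiodic g -> exists b : R, forall y, `|g y| <= b.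
Proof.
move=> g_cont g_per.
pose cube := [set v : 'rV[R]_M | forall i, `[(0 : R), 1] (v ord0 i)].
have cube_compact : compact cube.
  by apply: (@rV_compact _ _ (fun=> `[(0 : R), 1])) => _; exact: segment_compact.
have [b [_ gb]] : bounded_set (g @` cube).
  by apply/compact_bounded/continuous_compact => //; exact: continuous_subspaceT.
exists (b + 1) => y.
pose k := map_mx (fun x : R => Num.floor x) y.
rewrite -(subrK (intmx k) y) g_per; apply: (gb (b + 1)); first by rewrite ltrDl.
exists (y - intmx k) => // i; rewrite !mxE /= in_itv /=.
have /andP[floor_le lt_floorS] := floor_itv (y ord0 i); rewrite intrD in lt_floorS.
by rewrite subr_ge0 floor_le lerBlDr addrC ltW.
Qed.

Lemma compact_annulus n (c : 'rV[R]_n) (e r : R) :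
  compact ((fun t => `|c - t|) @^-1` `[e, r]).
Proof.
apply: bounded_closed_compact.
  exists (`|c| + r); split; first exact: num_real.
  move=> M cM t; rewrite /= in_itv /= => /andP[_ ctr].
  have -> : t = c - (c - t) by rewrite opprB addrC subrK.
  by apply: le_trans (ler_normB _ _) (ltW (le_lt_trans _ cM)); rewrite lerD.
apply: (proj1 (continuous_closedP _)); last exact: interval_closed.
move=> t; apply: continuous_comp; last exact: norm_continuous.
exact: (continuousB (@cst_continuous _ _ _ _) cvg_id).
Qed.

(* Near y0, F y stays within 2 b + 1 of F y0; were it at distance >= e, y would lie
   in the image under H of a compact annulus around F y0, a closed set missing y0. *)
Lemma bounded_displacement_inverse_continuous n (H F : 'rV[R]_n -> 'rV[R]_n) b :
  continuous H -> cancel F H -> cancel H F -> (forall y, `|F y - y| <= b) ->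
  continuous F.
Proof.
move=> H_cont FK HK Fb y0.
apply/(@cvgrPdist_lt _ _ _ _ (nbhs_filter y0)) => e e_gt0.
pose C := (fun t => `|F y0 - t|) @^-1` `[e, 2 * b + 1].
have HC_closed : closed (H @` C).
  apply: compact_closed; first exact: norm_hausdorff.
  by apply: continuous_compact; [exact: continuous_subspaceT | exact: compact_annulus].
have y0_notin_HC : ~ (H @` C) y0.
  move=> [t]; rewrite /C /= in_itv /= => /andP[e_le _] Ht.
  by move: e_le; rewrite -Ht HK subrr normr0 leNgt e_gt0.
near=> y.
have y_notin_HC : ~ (H @` C) y.
  by near: y; apply: open_nbhs_nbhs; split; [exact: closed_openC | exact: y0_notin_HC].
have y_close : `|y0 - y| < 1.
  by near: y; apply: (proj1 (@cvgrPdist_lt _ _ _ _ (nbhs_filter y0) id y0) cvg_id).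
rewrite ltNge; apply/negP => e_le; apply: y_notin_HC; exists (F y) => //.
rewrite /C /= in_itv /= e_le /=.
have -> : F y0 - F y = (F y0 - y0) + (y0 - y) + (y - F y) by rewrite !addrA !subrK.
have := ler_normD (F y0 - y0 + (y0 - y)) (y - F y).
have := ler_normD (F y0 - y0) (y0 - y).
have := Fb y0; have := Fb y; rewrite distrC; lra.
Unshelve. all: by end_near.
Qed.

End RowVectorTopology.

Section Twist.
Variables (R : realType) (d : nat) (Phi : 'rV[R]_(d + d) -> 'rV[R]_(d + d)).
Hypothesis Phi_twist : twist Phi.

Lemma twist_Qof_inj p : injective (Qof Phi ^~ p).
Proof. by have [g [QofK _]] := Phi_twist p; exact: can_inj QofK. Qed.

Lemma qhat_Qof q p : qhat Phi (Qof Phi q p) p = q.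
Proof. by apply: xget_unique => // q' /twist_Qof_inj. Qed.

Lemma hatPhi_Qof q p : hatPhi Phi (row_mx (Qof Phi q p) p) = row_mx q (Pof Phi q p).
Proof. by rewrite /hatPhi row_mxKl row_mxKr qhat_Qof. Qed.

End Twist.

Section Shear.
Variables (R : realType) (d N : nat) (A : 'M[R]_(N, d + d)).
Variable K : 'rV[R]_N -> 'rV[R]_(d + d).
Hypotheses (K_cont : continuous K) (K_per : Zperiodic K).

Local Notation mulA x := ((A *m x^T)^T).

Definition Phi (w : 'rV[R]_N) (y : 'rV[R]_(d + d)) := y + K (w + mulA y).

Hypothesis Phi_twist : forall w, twist (Phi w).

Lemma Qof_Phi w q p : Qof (Phi w) q p = q + lsubmx (K (w + mulA (row_mx q p))).
Proof. by rewrite /Qof /Phi linearD /= row_mxKl. Qed.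

Lemma Pof_Phi w q p : Pof (Phi w) q p = p + rsubmx (K (w + mulA (row_mx q p))).
Proof. by rewrite /Pof /Phi linearD /= row_mxKr. Qed.

Definition kick (z : 'rV[R]_(d + d)) : 'rV[R]_N := mulA (row_mx (lsubmx z) 0).

Definition shear (t : 'rV[R]_N) := t + kick (K t).

Lemma kick_continuous : continuous kick.
Proof.
apply: linear_mx_continuous => a u v; rewrite /kick.
have -> : row_mx (lsubmx (a *: u + v)) (0 : 'rV_d) =
    a *: row_mx (lsubmx u) 0 + row_mx (lsubmx v) 0.
  by rewrite linearP /= scale_row_mx add_row_mx scaler0 addr0.
by rewrite !linearP.
Qed.

Lemma shear_continuous : continuous shear.
Proof.
move=> t; apply: (@continuousD _ _ _ id (kick \o K)); first exact: cvg_id.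
by apply: continuous_comp; [exact: K_cont | exact: kick_continuous].
Qed.

Lemma shearD_int t k : shear (t + intmx k) = shear t + intmx k.
Proof. by rewrite /shear K_per addrAC. Qed.

Lemma shear_Qof w q p :
  shear (w + mulA (row_mx q p)) = w + mulA (row_mx (Qof (Phi w) q p) p).
Proof.
rewrite Qof_Phi /shear /kick; set X := lsubmx _.
have -> : row_mx (q + X) p = row_mx q p + row_mx X 0 by rewrite add_row_mx addr0.
by rewrite -addrA !linearD.
Qed.

Lemma Qof_Phi_shear t : Qof (Phi (shear t)) (- lsubmx (K t)) 0 = 0.
Proof.
by rewrite Qof_Phi -oppr0 -opp_row_mx oppr0 !linearN /= /shear addrK addNr.
Qed.

Lemma shear_inj : injective shear.
Proof.
move=> t1 t2 shear_eq.
have /oppr_inj Kq_eq : - lsubmx (K t1) = - lsubmx (K t2) :> 'rV_d.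
  apply: (twist_Qof_inj (Phi_twist (shear t1)) (p := 0)).
  by rewrite /= {2}shear_eq !Qof_Phi_shear.
by rewrite -(addrK (kick (K t1)) t1) -/(shear t1) shear_eq /kick Kq_eq addrK.
Qed.

Lemma shear_surj y : exists t, shear t = y.
Proof.
have [g [_ [gK _]]] := Phi_twist y 0.
exists (y + mulA (row_mx (g 0) 0)).
by rewrite shear_Qof gK row_mx0 trmx0 mulmx0 trmx0 addr0.
Qed.

Definition shear_inv (y : 'rV[R]_N) := xget 0 [set t | shear t = y].

Lemma shear_invK : cancel shear_inv shear.
Proof. by move=> y; apply: (xgetPex 0 (shear_surj y)). Qed.

Lemma shearK : cancel shear shear_inv.
Proof. by move=> t; apply: shear_inj; rewrite shear_invK. Qed.

Lemma shear_invD_int y k : shear_inv (y + intmx k) = shear_inv y + intmx k.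
Proof. by apply: shear_inj; rewrite shearD_int !shear_invK. Qed.

Lemma shear_inv_continuous : continuous shear_inv.
Proof.
have [b kick_b] : exists b : R, forall t, `|kick (K t)| <= b.
  apply: Zperiodic_continuous_bounded => [t|y k]; last by rewrite K_per.
  by apply: continuous_comp; [exact: K_cont | exact: kick_continuous].
apply: (bounded_displacement_inverse_continuous (b := b)) shear_continuous shear_invK shearK _.
by move=> y; rewrite -{2}(shear_invK y) /shear opprD addrA subrr add0r normrN.
Qed.

Definition flip_q (z : 'rV[R]_(d + d)) := row_mx (- lsubmx z) (rsubmx z).

Lemma flip_q_continuous : continuous flip_q.
Proof.
apply: linear_mx_continuous => a u v.
by rewrite /flip_q !linearP /= scale_row_mx add_row_mx.
Qed.

Definition gamma (y : 'rV[R]_N) := flip_q (K (shear_inv y)).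

Lemma gamma_continuous : continuous gamma.
Proof.
move=> y; apply: continuous_comp; last exact: flip_q_continuous.
by apply: continuous_comp; [exact: shear_inv_continuous | exact: K_cont].
Qed.

Lemma gamma_periodic : Zperiodic gamma.
Proof. by move=> y k; rewrite /gamma shear_invD_int K_per. Qed.

Lemma hatPhi_sub_id w x : hatPhi (Phi w) x - x = gamma (w + mulA x).
Proof.
rewrite /gamma /flip_q; set t := shear_inv _; set X := lsubmx (K t).
have t_eq : w + mulA (row_mx (lsubmx x - X) (rsubmx x)) = t.
  rewrite -[t](addrK (kick (K t))) -/(shear t) shear_invK /kick -/X.
  have -> : row_mx (lsubmx x - X) (rsubmx x) = x - row_mx X 0.
    by rewrite -[x in RHS]hsubmxK opp_row_mx add_row_mx oppr0 addr0.
  by rewrite !linearB /= addrA.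
have Qof_eq : Qof (Phi w) (lsubmx x - X) (rsubmx x) = lsubmx x.
  by rewrite Qof_Phi t_eq subrK.
rewrite -[x in hatPhi _ x]hsubmxK -[in row_mx (lsubmx x) _]Qof_eq hatPhi_Qof //.
rewrite Pof_Phi t_eq -[x in _ - x]hsubmxK opp_row_mx add_row_mx.
by rewrite addrAC subrr add0r addrAC subrr add0r.
Qed.

End Shear.

Theorem proposition5p1 (R : realType) (d N : nat) (A : 'M[R]_(N, d + d))
  (K : 'rV[R]_N -> 'rV[R]_(d + d)) :
  continuous K -> Zperiodic K ->
  (forall omega : 'rV[R]_N,
      symplectic_twist_diffeo (fun x : 'rV[R]_(d + d) => x + K (omega + (A *m x^T)^T))) ->
  forall omega : 'rV[R]_N,
    quasiperiodic
      (fun x : 'rV[R]_(d + d) =>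
         hatPhi (fun y : 'rV[R]_(d + d) => y + K (omega + (A *m y^T)^T)) x - x).
Proof.
move=> K_cont K_per Phi_std w.
have Phi_twist w' : twist (Phi A K w') by case: (Phi_std w').
exists N, (gamma A K), w, A.
split; last split.
- exact: gamma_continuous.
- exact: gamma_periodic.
- exact: hatPhi_sub_id.
Qed.
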